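(* Let $n\ge 3$ and let $A_1A_2\dots A_n$ be a polygon in the Euclidean plane, with vertex indices taken modulo $n$. Let $M$ be a point of the plane distinct from all vertices. Suppose that for every $i\in\{1,\dots,n\}$ and every $j\in\{1,\dots,n\}$ with $j\notin\{i,i-1\}$ (mod $n$), the line $A_iM$ meets the line $A_jA_{j+1}$ in a single point $M_{ij}$, and that $M_{ij}\notin\{A_j,A_{j+1}\}$. Then $$\prod_{\substack{i,j=1\\ j\notin\{i,\,i-1\}}}^{n}\frac{\overline{M_{ij}A_j}}{\overline{M_{ij}A_{j+1}}}=(-1)^n .$$
   Context: For three collinear points $X,Y,Z$ with $X\neq Z$, $\frac{\overline{XY}}{\overline{XZ}}$ denotes the ratio of signed (directed) lengths along their common line: it equals $|XY|/|XZ|$ if $Y$ and $Z$ lie on the same side of $X$ on that line, and $-|XY|/|XZ|$ otherwise. *)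

From mathcomp Require Import all_boot all_order all_algebra.
Set Implicit Arguments. Unset Strict Implicit. Unset Printing Implicit Defensive.
Import Order.TTheory GRing.Theory Num.Theory.
Local Open Scope ring_scope.

Section Plane.
Variable R : rcfType.

Definition vsub (Q P : R * R) : R * R := (Q.1 - P.1, Q.2 - P.2).
Definition dot (u v : R * R) : R := u.1 * v.1 + u.2 * v.2.
Definition dist (P Q : R * R) : R := Num.sqrt (dot (vsub Q P) (vsub Q P)).

(* X lies on the line through P and Q (P <> Q assumed where used) *)
Definition on_line (P Q X : R * R) : Prop :=
  exists t : R, X = (P.1 + t * (Q.1 - P.1), P.2 + t * (Q.2 - P.2)).

(* Signed ratio  XY / XZ  for collinear X, Y, Z with X <> Z:
   |XY|/|XZ| if Y and Z lie on the same side of X (the vectors XY, XZ point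
   the same way), and -|XY|/|XZ| otherwise. When Y = X the value is 0. *)
Definition sratio (X Y Z : R * R) : R :=
  (if 0 <= dot (vsub Y X) (vsub Z X) then 1 else -1) * (dist X Y / dist X Z).
End Plane.

From mathcomp Require Import all_boot all_order all_algebra.
From mathcomp Require Import ring zify.
Set Implicit Arguments.
Unset Strict Implicit.
Unset Printing Implicit Defensive.
Import Order.TTheory GRing.Theory Num.Theory.
Local Open Scope ring_scope.

(* Fix i and let a(k) be the signed area of the triangle A_i M A_k, i.e. up to
   a constant factor the signed distance from A_k to the line A_i M.  Since
   M_ij lies on that line and on A_j A_(j+1), the signed ratio
   M_ij A_j / M_ij A_(j+1) equals a(j) / a(j+1).  Over j <> i-1, i the product
   telescopes to a(i+1) / a(i-1) = - c(i) / c(i-1), where c(i) is the signed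
   area of A_i A_(i+1) M, and the product of these over i is (-1)^n. *)

Section SignedArea.
Variable R : rcfType.
Implicit Types P Q B C X Y : R * R.

(* Twice the signed area of the triangle PQX. *)
Definition area P Q X : R :=
  (Q.1 - P.1) * (X.2 - P.2) - (Q.2 - P.2) * (X.1 - P.1).

Lemma on_line_left P Q : on_line P Q P.
Proof. by exists 0; rewrite !mul0r !addr0; case: P. Qed.

Lemma on_line_right P Q : on_line P Q Q.
Proof. by exists 1; rewrite !mul1r !subrKC; case: Q. Qed.

Lemma area_on_line P Q X : on_line P Q X -> area P Q X = 0.
Proof. by move=> [t ->]; rewrite /area /=; ring. Qed.

Lemma on_line_area0 P Q X : P <> Q -> area P Q X = 0 -> on_line P Q X.
Proof.
case: P Q X => [p1 p2] [q1 q2] [x1 x2] /= P_neq_Q; rewrite /area /= => area0.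
have [q1p1|q1p1] := eqVneq (q1 - p1) 0.
- have q2p2 : q2 - p2 != 0.
    apply: contra_notN P_neq_Q => /eqP q2p2.
    by congr pair; apply/eqP; rewrite eq_sym -subr_eq0; apply/eqP.
  exists ((x2 - p2) / (q2 - p2)) => /=; congr pair;
    last by rewrite divfK // subrKC.
  apply/eqP; rewrite -subr_eq0 q1p1 mulr0 addr0; apply/eqP.
  transitivity (- ((q1 - p1) * (x2 - p2) - (q2 - p2) * (x1 - p1)) / (q2 - p2)).
    by rewrite q1p1; field.
  by rewrite area0 oppr0 mul0r.
- exists ((x1 - p1) / (q1 - p1)) => /=; congr pair;
    first by rewrite divfK // subrKC.
  apply/eqP; rewrite -subr_eq0; apply/eqP.
  transitivity (((q1 - p1) * (x2 - p2) - (q2 - p2) * (x1 - p1)) / (q1 - p1)).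
    by field.
  by rewrite area0 mul0r.
Qed.

Lemma dot_vsub_gt0 B C : B <> C -> 0 < dot (vsub C B) (vsub C B).
Proof.
case: B C => [b1 b2] [c1 c2] B_neq_C; rewrite /dot /vsub /=.
rewrite -!expr2 lt0r addr_ge0 ?sqr_ge0 // andbT paddr_eq0 ?sqr_ge0 //.
rewrite !sqrf_eq0 !subr_eq0; apply: contra_notN B_neq_C.
by case/andP => /eqP-> /eqP->.
Qed.

(* This holds also at s = 1, where both sides are 0. *)
Lemma sratio_on_line B C s :
  B <> C ->
  sratio (B.1 + s * (C.1 - B.1), B.2 + s * (C.2 - B.2)) B C = s / (s - 1).
Proof.
move=> B_neq_C; have [->|s_neq1] := eqVneq s 1.
  rewrite subrr invr0 mulr0 !mul1r !subrKC /sratio /dist /vsub /dot /=.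
  by rewrite !subrr !mulr0 !addr0 sqrtr0 invr0 !mulr0.
set X := (_, _); set N := dot (vsub C B) (vsub C B).
have N_gt0 : 0 < N by apply: dot_vsub_gt0.
have s1_neq0 : 1 - s != 0 by rewrite subr_eq0 eq_sym.
pose r := s / (1 - s).
have dist_XB : dist X B = `|s| * Num.sqrt N.
  rewrite /dist -sqrtr_sqr -sqrtrM ?sqr_ge0 //; congr Num.sqrt.
  by rewrite /N /dot /vsub /=; ring.
have dist_XC : dist X C = `|1 - s| * Num.sqrt N.
  rewrite /dist -sqrtr_sqr -sqrtrM ?sqr_ge0 //; congr Num.sqrt.
  by rewrite /N /dot /vsub /=; ring.
have dot_XBC : dot (vsub B X) (vsub C X) = - r * ((1 - s) ^+ 2 * N).
  by rewrite /r /N /dot /vsub /=; field.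
have sqrtN_neq0 : Num.sqrt N != 0 by rewrite gt_eqF ?sqrtr_gt0.
have sqN_gt0 : 0 < (1 - s) ^+ 2 * N.
  by apply: mulr_gt0 => //; rewrite exprn_even_gt0 // s1_neq0 orbT.
rewrite /sratio dot_XBC pmulr_lge0 //.
rewrite dist_XB dist_XC invfM mulrACA divff // mulr1 -normf_div -/r oppr_ge0.
have -> : s / (s - 1) = - r by rewrite /r -opprB invrN mulrN.
by case: lerP => [/ler0_norm|/gtr0_norm] ->; rewrite ?mul1r ?mulN1r.
Qed.

Lemma area_lerp P Q B C s :
  area P Q (B.1 + s * (C.1 - B.1), B.2 + s * (C.2 - B.2)) =
  (1 - s) * area P Q B + s * area P Q C.
Proof. by rewrite /area /=; ring. Qed.

Lemma sratio_area P Q B C X :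
  area P Q C != 0 -> on_line P Q X -> on_line B C X ->
  sratio X B C = area P Q B / area P Q C.
Proof.
move=> aC_neq0 /area_on_line aX [s eX].
have lerp0 : (1 - s) * area P Q B + s * area P Q C = 0 by rewrite -area_lerp -eX.
have s_neq1 : s - 1 != 0.
  rewrite subr_eq0; apply: contraNneq aC_neq0 => s1.
  by move: lerp0; rewrite s1 subrr mul0r add0r mul1r => ->.
have B_neq_C : B <> C.
  move=> BC; move: aX; rewrite eX -BC !subrr !mulr0 !addr0 -surjective_pairing BC.
  exact/eqP.
rewrite eX sratio_on_line //; apply/eqP; rewrite eqr_div // -subr_eq0; apply/eqP.
by rewrite -lerp0; ring.
Qed.

Lemma area_neq0_off_meet P Q B C X Y :
  P <> Q -> on_line B C Y ->
  (forall Z, on_line P Q Z -> on_line B C Z -> Z = X) -> X <> Y ->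
  area P Q Y != 0.
Proof.
move=> P_neq_Q BCY meet_uniq X_neq_Y; apply/eqP => area0.
by apply/X_neq_Y/esym/meet_uniq => //; apply: on_line_area0.
Qed.
Definition meets_properly P Q B C X : Prop :=
  [/\ on_line P Q X, on_line B C X,
      (forall Y, on_line P Q Y -> on_line B C Y -> Y = X), X <> B & X <> C].

Lemma meets_properly_sratio P Q B C X :
  P <> Q -> meets_properly P Q B C X ->
  [/\ area P Q B != 0, area P Q C != 0 & sratio X B C = area P Q B / area P Q C].
Proof.
move=> P_neq_Q [PQX BCX meet_uniq X_neq_B X_neq_C].
have aC_neq0 := area_neq0_off_meet P_neq_Q (on_line_right B C) meet_uniq X_neq_C.
split=> //; last exact: sratio_area.
exact: area_neq0_off_meet P_neq_Q (on_line_left B C) meet_uniq X_neq_B.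
Qed.
End SignedArea.

Section CyclicIndex.
Variable n : nat.
Implicit Types i : 'I_n.

Lemma val_ordS i : val (ordS i) = if i.+1 == n then 0%N else i.+1.
Proof.
rewrite /=; case: eqP => [-> | ne]; first exact: modnn.
by rewrite modn_small // ltn_neqAle ltn_ord andbT; apply/eqP.
Qed.

Lemma ordS_neq i : (1 < n)%N -> ordS i != i.
Proof.
move=> n_gt1; apply/eqP => /(congr1 val); rewrite val_ordS /=.
by have := ltn_ord i; case: eqP; lia.
Qed.

Lemma ord_pred_neq i : (1 < n)%N -> ord_pred i != i.
Proof.
by move=> n_gt1; rewrite -(inj_eq (@ordS_inj n)) ord_predK eq_sym ordS_neq.
Qed.

Lemma ordS_neq_pred i : (2 < n)%N -> ordS i != ord_pred i.
Proof.
move=> n_gt2; rewrite -(inj_eq (@ordS_inj n)) ord_predK.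
apply/eqP => /(congr1 val); rewrite !val_ordS /=.
by have := ltn_ord i; case: (i.+1 =P n); case: eqP; lia.
Qed.

Variable F : fieldType.
Implicit Types f : 'I_n -> F.

Lemma prod_ratio_ord_pred f :
  (forall i, f i != 0) -> \prod_i (f i / f (ord_pred i)) = 1.
Proof.
move=> f_neq0; rewrite prodf_div [X in _ / X](reindex_inj (@ordS_inj n)) /=.
under [X in _ / X]eq_bigr do rewrite ordSK.
by rewrite divff // prodf_seq_neq0; apply/allP => i _; apply: f_neq0.
Qed.

Lemma prod_ratio_ordS_telescope f i :
  (2 < n)%N ->
  (forall k, [&& k != ord_pred i, k != i & k != ordS i] -> f k != 0) ->
  \prod_(j | (j != i) && (j != ord_pred i)) (f j / f (ordS j)) =
  f (ordS i) / f (ord_pred i).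
Proof.
move=> n_gt2 f_neq0; have n_gt1 := ltnW n_gt2.
rewrite prodf_div [X in _ / X](reindex_inj (@ord_pred_inj n)) /=.
under [X in _ / X]eq_bigr do rewrite ord_predK.
rewrite [X in _ / X](eq_bigl (fun k => (k != ordS i) && (k != i))); last first.
  move=> k; rewrite (inj_eq (@ord_pred_inj n)).
  by rewrite -[ord_pred k == i](inj_eq (@ordS_inj n)) ord_predK.
rewrite (bigD1 (ordS i)) /=; last by rewrite ordS_neq // ordS_neq_pred.
rewrite [X in _ / X](bigD1 (ord_pred i)) /=; last first.
  by rewrite eq_sym ordS_neq_pred // ord_pred_neq.
set P := \prod_(k | [&& k != ord_pred i, k != i & k != ordS i]) f k.
have -> : \prod_(j | (j != i) && (j != ord_pred i) && (j != ordS i)) f j = P.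
  apply: eq_bigl => k.
  by case: (k == i) (k == ordS i) (k == ord_pred i) => [] [] [].
have -> : \prod_(j | (j != ordS i) && (j != i) && (j != ord_pred i)) f j = P.
  apply: eq_bigl => k.
  by case: (k == i) (k == ordS i) (k == ord_pred i) => [] [] [].
have P_neq0 : P != 0 by apply/prodf_neq0.
by rewrite invfM mulrACA divff // mulr1.
Qed.
End CyclicIndex.

Theorem mainTheorem3 (R : rcfType) (n : nat) (A : 'I_n -> R * R) (M : R * R)
    (Mij : 'I_n -> 'I_n -> R * R) :
  (3 <= n)%N ->
  (forall j, A j <> A (ordS j)) ->
  (forall i, M <> A i) ->
  (forall i j, j != i -> j != ord_pred i ->
     [/\ on_line (A i) M (Mij i j),
         on_line (A j) (A (ordS j)) (Mij i j),
         (forall X, on_line (A i) M X -> on_line (A j) (A (ordS j)) X ->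
                    X = Mij i j),
         Mij i j <> A j & Mij i j <> A (ordS j)]) ->
  \prod_(i < n) \prod_(j < n | (j != i) && (j != ord_pred i))
     sratio (Mij i j) (A j) (A (ordS j)) = (-1) ^+ n.
Proof.
move=> n_gt2 _ M_neq_A meet.
pose a i k := area (A i) M (A k).
pose c i := area (A i) (A (ordS i)) M.
have {}meet i j (ji : j != i) (jpi : j != ord_pred i) :=
  meets_properly_sratio (fun e => M_neq_A i (esym e)) (meet i j ji jpi).
have a_ordS i : a i (ordS i) = - c i by rewrite /a /c /area; ring.
have a_ord_pred i : a i (ord_pred i) = c (ord_pred i).
  by rewrite /a /c ord_predK /area; ring.
have c_neq0 i : c i != 0.
  rewrite -oppr_eq0 -a_ordS.
  by have [] := meet i (ordS i) (ordS_neq i (ltnW n_gt2)) (ordS_neq_pred i n_gt2).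
have row i :
    \prod_(j | (j != i) && (j != ord_pred i)) sratio (Mij i j) (A j) (A (ordS j))
    = - c i / c (ord_pred i).
  rewrite (eq_bigr (fun j => a i j / a i (ordS j))); last first.
    by move=> j /andP[ji jpi]; have [] := meet i j ji jpi.
  rewrite prod_ratio_ordS_telescope // => [|k /and3P[kp ki _]].
    by rewrite a_ordS a_ord_pred.
  by have [] := meet i k ki kp.
under eq_bigr do rewrite row mulNr -mulN1r.
by rewrite big_split /= prod_ratio_ord_pred // mulr1 prodr_const card_ord.
Qed.
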